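(* Let $\mathbf c=\{c_n\}_{n=1}^{\infty}$ be a complex sequence with $\lim_{n\to\infty}c_n=0$, and let $\{R(n)\}$ be an $O$-regularly varying sequence such that for some constant $M(\mathbf c)>0$ $$\sum_{n=m}^{\infty}\left|\frac{c_n}{R(n)}-\frac{c_{n+1}}{R(n+1)}\right|\le M(\mathbf c)\frac{|c_m|}{R(m)}\qquad\text{for all } m=1,2,\dots.$$ Then there exist a natural number $N_0$ and a constant $M'>0$ such that $$\sum_{n=m}^{2m}|c_n-c_{n+1}|\le M'\max_{m\le n<m+N_0}|c_n|\qquad\text{for all } m=1,2,\dots.$$
   Context: A sequence $\{R(n)\}_{n=0}^\infty$ is $O$-regularly varying if it is non-decreasing, positive, and $\limsup_{n\to\infty}R(2n)/R(n)<\infty$. *)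

From Stdlib Require Import Reals List.
From Coquelicot Require Import Coquelicot.
Open Scope R_scope.

Definition O_regularly_varying (Rs : nat -> R) : Prop :=
  (forall n : nat, Rs n <= Rs (S n)) /\
  (forall n : nat, 0 < Rs n) /\
  Rbar_lt (LimSup_seq (fun n => Rs (2 * n)%nat / Rs n)) p_infty.

(* max_{m <= n < m + N} |c_n|  (meaningful for N >= 1; values are >= 0) *)
Definition max_abs_block (c : nat -> C) (m N : nat) : R :=
  fold_right Rmax 0 (map (fun n => Cmod (c n)) (seq m N)).

From Stdlib Require Import Reals List Lra Lia.
From Coquelicot Require Import Coquelicot.
Open Scope R_scope.

(* With a_n = c_n / R(n) one has c_n - c_(n+1) = R(n+1) (a_n - a_(n+1)) + (R(n) - R(n+1)) a_n.
   The hypothesis bounds the variation of a on [m, oo) by M |a_m|, hence also |a_n| by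
   (1 + M) |a_m| there; as R is nondecreasing, summing over m <= n <= 2m gives at most
   R(2m+1) (1 + 2M) |c_m| / R(m), and O-regular variation bounds R(2m+1) / R(m). *)

Lemma sum_n_shift {G : AbelianMonoid} (a : nat -> G) (m j : nat) :
  sum_n (fun k => a (m + k)%nat) j = sum_n_m a m (m + j).
Proof.
  induction j as [| j IHj].
  - rewrite sum_O, Nat.add_0_r, sum_n_n. reflexivity.
  - rewrite sum_Sn, IHj, Nat.add_succ_r, sum_n_Sm by lia. reflexivity.
Qed.

Lemma sum_n_m_le_loc (a b : nat -> R) (n m : nat) :
  (forall k, (n <= k <= m)%nat -> a k <= b k) -> sum_n_m a n m <= sum_n_m b n m.
Proof.
  intros Hab. destruct (Nat.le_gt_cases n m) as [Hnm | Hmn].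
  - induction Hnm as [| m Hnm IHm].
    + rewrite !sum_n_n. apply Hab. lia.
    + rewrite !sum_n_Sm by lia.
      apply Rplus_le_compat.
      * apply IHm. intros k Hk. apply Hab. lia.
      * apply Hab. lia.
  - rewrite !sum_n_m_zero by exact Hmn. apply Rle_refl.
Qed.

Lemma sum_n_m_telescope (u : nat -> R) (n m : nat) :
  (n <= m)%nat -> sum_n_m (fun k => u (S k) - u k) n m = u (S m) - u n.
Proof.
  induction 1 as [| m Hnm IHm].
  - rewrite sum_n_n. reflexivity.
  - rewrite sum_n_Sm, IHm by lia. unfold plus. simpl. ring.
Qed.

Lemma is_series_shift_sum_n_m_le (a : nat -> R) (m : nat) (l : R) :
  (forall k, 0 <= a k) -> is_series (fun k => a (m + k)%nat) l ->
  forall p, (m <= p)%nat -> sum_n_m a m p <= l.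
Proof.
  intros Ha Hl p Hp. replace p with (m + (p - m))%nat by lia.
  rewrite <- sum_n_shift. apply is_lim_seq_incr_compare; [exact Hl |].
  intros j. rewrite sum_Sn. unfold plus. simpl. specialize (Ha (m + S j)%nat). lra.
Qed.

Lemma Cmod_sub_le_sum_n_m (a : nat -> C) (m n : nat) :
  (m <= n)%nat ->
  Cmod (a (S n) - a m) <= sum_n_m (fun k => Cmod (a k - a (S k))) m n.
Proof.
  induction 1 as [| n Hmn IHn].
  - rewrite sum_n_n, <- Cmod_opp. right. f_equal. ring.
  - rewrite sum_n_Sm by lia. unfold plus. simpl.
    replace (a (S (S n)) - a m)%C with ((a (S n) - a m) - (a (S n) - a (S (S n))))%C by ring.
    eapply Rle_trans; [apply Cmod_triangle |]. rewrite Cmod_opp. lra.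
Qed.

Lemma Cmod_le_of_sum_n_m_le (a : nat -> C) (m : nat) (D : R) :
  (forall p, (m <= p)%nat -> sum_n_m (fun k => Cmod (a k - a (S k))) m p <= D) ->
  forall n, (m <= n)%nat -> Cmod (a n) <= Cmod (a m) + D.
Proof.
  intros HD n Hmn.
  assert (HD0 : 0 <= D).
  { eapply Rle_trans; [| apply (HD m); lia]. rewrite sum_n_n. apply Cmod_ge_0. }
  destruct (Nat.eq_dec m n) as [<- | Hne]; [lra |].
  destruct n as [| n]; [lia |].
  replace (a (S n)) with (a m + (a (S n) - a m))%C by ring.
  eapply Rle_trans; [apply Cmod_triangle |]. apply Rplus_le_compat_l.
  eapply Rle_trans; [apply Cmod_sub_le_sum_n_m | apply HD]; lia.
Qed.

Lemma RtoC_neq_0 (r : R) : r <> 0 -> RtoC r <> 0%C.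
Proof. intros Hr E. apply Hr, RtoC_inj, E. Qed.

Lemma Cmod_sub_le_rescaled (x y : C) (r s : R) :
  0 < r -> r <= s ->
  Cmod (x - y) <= s * Cmod (x / r - y / s) + (s - r) * Cmod (x / r).
Proof.
  intros Hr Hrs.
  replace (x - y)%C with (s * (x / r - y / s) + (r - s) * (x / r))%C
    by (field; split; apply RtoC_neq_0; lra).
  eapply Rle_trans; [apply Cmod_triangle |].
  rewrite !Cmod_mult, <- RtoC_minus, !Cmod_R, (Rabs_pos_eq s), Rabs_left1 by lra.
  lra.
Qed.

Lemma LimSup_seq_lt_p_infty_eventually_le (u : nat -> R) :
  Rbar_lt (LimSup_seq u) p_infty -> exists K, eventually (fun n => u n <= K).
Proof.
  intros Hlt. destruct (ex_LimSup_seq u) as [l Hl].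
  rewrite (is_LimSup_seq_unique _ _ Hl) in Hlt.
  destruct l as [l | | ]; simpl in Hlt, Hl; [| contradiction |].
  - destruct (Hl (mkposreal 1 Rlt_0_1)) as [_ [N HN]].
    exists (l + 1), N. intros n Hn. apply Rlt_le, (HN n Hn).
  - destruct (Hl 0) as [N HN].
    exists 0, N. intros n Hn. apply Rlt_le, (HN n Hn).
Qed.

Section ORegularVariation.

Variable Rs : nat -> R.
Hypothesis Rs_growing : Un_growing Rs.
Hypothesis Rs_pos : forall n, 0 < Rs n.

Lemma doubling_eventually_le :
  Rbar_lt (LimSup_seq (fun n => Rs (2 * n)%nat / Rs n)) p_infty ->
  exists K, eventually (fun n => Rs (2 * n)%nat <= K * Rs n).
Proof.
  intros Hlt. destruct (LimSup_seq_lt_p_infty_eventually_le _ Hlt) as [K [N HN]].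
  exists K, N. intros n Hn. specialize (HN n Hn). cbv beta in HN.
  pose proof (Rs_pos n).
  apply Rmult_le_compat_r with (r := Rs n) in HN; [| lra].
  unfold Rdiv in HN. rewrite Rmult_assoc, Rinv_l in HN; lra.
Qed.

(* Below the threshold [N]: [Rs (2 n) <= Rs (2 N) = (Rs (2 N) / Rs 0) Rs 0 <= K0 Rs n]. *)
Lemma doubling_le :
  (exists K, eventually (fun n => Rs (2 * n)%nat <= K * Rs n)) ->
  exists K, 1 <= K /\ forall n, Rs (2 * n)%nat <= K * Rs n.
Proof.
  intros [K [N HN]].
  set (K0 := Rs (2 * N)%nat / Rs O).
  set (K1 := Rmax 1 (Rmax K K0)).
  assert (HK : K <= K1) by (eapply Rle_trans; [apply Rmax_l | apply Rmax_r]).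
  assert (HK0 : K0 <= K1) by (eapply Rle_trans; [apply Rmax_r | apply Rmax_r]).
  exists K1. split; [apply Rmax_l |]. intros n.
  pose proof (Rs_pos n).
  destruct (Nat.le_gt_cases N n) as [Hn | Hn].
  - specialize (HN n Hn). cbv beta in HN. nra.
  - assert (Rs (2 * n)%nat <= K0 * Rs O).
    { pose proof (Rs_pos O). unfold K0, Rdiv.
      rewrite Rmult_assoc, Rinv_l, Rmult_1_r by lra.
      apply tech9; [exact Rs_growing | lia]. }
    assert (Rs O <= Rs n) by (apply tech9; [exact Rs_growing | lia]).
    assert (0 <= K0) by (apply Rlt_le, Rdiv_lt_0_compat; apply Rs_pos).
    nra.
Qed.

Lemma odd_doubling_le :
  (exists K, 1 <= K /\ forall n, Rs (2 * n)%nat <= K * Rs n) ->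
  exists B, 0 < B /\ forall m, (1 <= m)%nat -> Rs (S (2 * m)) <= B * Rs m.
Proof.
  intros [K [HK1 HK]]. exists (K * K). split; [nra |]. intros m Hm.
  assert (Rs (S (2 * m)) <= Rs (2 * S m)%nat) by (apply tech9; [exact Rs_growing | lia]).
  assert (Rs (S m) <= Rs (2 * m)%nat) by (apply tech9; [exact Rs_growing | lia]).
  pose proof (HK m). pose proof (HK (S m)).
  nra.
Qed.

Lemma sum_n_m_Cmod_sub_le (c : nat -> C) (m p : nat) (D : R) :
  (m <= p)%nat ->
  (forall q, (m <= q)%nat ->
     sum_n_m (fun n => Cmod (c n / Rs n - c (S n) / Rs (S n))) m q <= D) ->
  sum_n_m (fun n => Cmod (c n - c (S n))) m p
    <= Rs (S p) * (Cmod (c m) / Rs m + 2 * D).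
Proof.
  intros Hmp HD.
  set (a := fun n => (c n / Rs n)%C).
  set (d := fun n => Cmod (a n - a (S n))).
  set (A := Cmod (a m) + D).
  assert (Ha : forall n, (m <= n)%nat -> Cmod (a n) <= A)
    by exact (Cmod_le_of_sum_n_m_le a m D HD).
  assert (Hd : forall n, 0 <= d n) by (intros; apply Cmod_ge_0).
  assert (HRsp : forall n, (n <= p)%nat -> Rs (S n) <= Rs (S p))
    by (intros; apply tech9; [exact Rs_growing | lia]).
  assert (Hterm : forall n, (m <= n <= p)%nat ->
            Cmod (c n - c (S n)) <= Rs (S p) * d n + (Rs (S n) - Rs n) * A).
  { intros n Hn.
    eapply Rle_trans.
    { apply (Cmod_sub_le_rescaled _ _ (Rs n) (Rs (S n))); [apply Rs_pos | apply Rs_growing]. }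
    pose proof (Rs_growing n).
    apply Rplus_le_compat.
    - apply Rmult_le_compat_r; [apply Hd | apply HRsp; lia].
    - apply Rmult_le_compat_l; [lra | apply Ha; lia]. }
  transitivity (plus (sum_n_m (fun n => mult (Rs (S p)) (d n)) m p)
                     (sum_n_m (fun n => mult (Rs (S n) - Rs n) A) m p)).
  { rewrite <- sum_n_m_plus. apply sum_n_m_le_loc. exact Hterm. }
  rewrite sum_n_m_mult_l, sum_n_m_mult_r, sum_n_m_telescope by exact Hmp.
  unfold plus, mult. simpl.
  (* the rewritten sum lives in a convertible but syntactically different monoid, which
     [lra] would treat as a different atom *)
  change (Ring.AbelianMonoid R_Ring) with R_AbelianMonoid.
  pose proof (Rs_pos m).
  assert (Ham : Cmod (a m) = Cmod (c m) / Rs m).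
  { unfold a. rewrite Cmod_div, Cmod_R, Rabs_pos_eq; [reflexivity | lra |].
    apply RtoC_neq_0. lra. }
  assert (Hsum : sum_n_m d m p <= D) by exact (HD p Hmp).
  assert (HA : 0 <= A) by (pose proof (Ha m (le_n m)); pose proof (Cmod_ge_0 (a m)); lra).
  assert (Rs m <= Rs (S p)) by (apply tech9; [exact Rs_growing | lia]).
  assert (Rs (S p) * sum_n_m d m p <= Rs (S p) * D)
    by (apply Rmult_le_compat_l; lra).
  assert (0 <= Rs m * A) by (apply Rmult_le_pos; lra).
  rewrite <- Ham. unfold A in *. lra.
Qed.

End ORegularVariation.

Lemma O_regularly_varying_odd_doubling_le (Rs : nat -> R) :
  O_regularly_varying Rs ->
  exists B, 0 < B /\ forall m, (1 <= m)%nat -> Rs (S (2 * m)) <= B * Rs m.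
Proof.
  intros [Rs_growing [Rs_pos Hlimsup]].
  apply odd_doubling_le, doubling_le, doubling_eventually_le; assumption.
Qed.

Lemma max_abs_block_1 (c : nat -> C) (m : nat) : max_abs_block c m 1 = Cmod (c m).
Proof. unfold max_abs_block. simpl. apply Rmax_left, Cmod_ge_0. Qed.

Theorem theorem3 (c : nat -> C) (Rs : nat -> R) :
  filterlim c eventually (locally (0 : C)) ->
  O_regularly_varying Rs ->
  (exists Mc : R, 0 < Mc /\
     forall m : nat, (1 <= m)%nat ->
       exists Ssum : R,
         is_series (fun k : nat =>
            Cmod (c (m + k)%nat / RtoC (Rs (m + k)%nat)
                  - c (S (m + k)) / RtoC (Rs (S (m + k))))) Ssum /\
         Ssum <= Mc * (Cmod (c m) / Rs m)) ->
  exists N0 : nat, (1 <= N0)%nat /\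
  exists M' : R, 0 < M' /\
    forall m : nat, (1 <= m)%nat ->
      sum_n_m (fun n : nat => Cmod (c n - c (S n))) m (2 * m)
        <= M' * max_abs_block c m N0.
Proof.
  intros _ HR [Mc [HMc Hseries]].
  destruct (O_regularly_varying_odd_doubling_le Rs HR) as [B [HB HRsB]].
  destruct HR as [Rs_growing [Rs_pos _]].
  exists 1%nat. split; [lia |]. exists (B * (1 + 2 * Mc)). split; [nra |].
  intros m Hm. rewrite max_abs_block_1.
  destruct (Hseries m Hm) as [Ssum [HS HSle]].
  set (q := Cmod (c m) / Rs m).
  assert (Hvar : forall p, (m <= p)%nat ->
            sum_n_m (fun n => Cmod (c n / Rs n - c (S n) / Rs (S n))) m p <= Mc * q).
  { intros p Hp. eapply Rle_trans; [| exact HSle].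
    apply (is_series_shift_sum_n_m_le _ m Ssum); [intros; apply Cmod_ge_0 | exact HS | exact Hp]. }
  eapply Rle_trans.
  { apply (sum_n_m_Cmod_sub_le Rs Rs_growing Rs_pos c m (2 * m) (Mc * q)); [lia | exact Hvar]. }
  pose proof (Rs_pos m). pose proof (HRsB m Hm).
  assert (Hq : 0 <= q) by (apply Rdiv_le_0_compat; [apply Cmod_ge_0 | lra]).
  assert (Hcm : Cmod (c m) = q * Rs m) by (unfold q; field; lra).
  fold q. rewrite Hcm.
  assert (Rs (S (2 * m)) * ((1 + 2 * Mc) * q) <= B * Rs m * ((1 + 2 * Mc) * q))
    by (apply Rmult_le_compat_r; nra).
  lra.
Qed.
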